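(* Consider the single-hop VAoI system described in the context with maximum average update rate $\alpha\in(0,1]$. The threshold-based policy minimizing the average VAoI subject to the rate constraint $\lim_{T\to\infty}\frac1T\mathbb{E}\big[\sum_{t=0}^{T-1}a(t)\big]\le\alpha$ is a randomized mixture of the two threshold policies with thresholds $\Delta_T^\ast$ and $\Delta_T^\ast-1$, applied with probabilities $\gamma$ and $1-\gamma$ respectively, where \[ \Delta_T^\ast=\left\lceil \frac{p_g}{p_s}\Big(\frac1\alpha-1+p_s\Big)\right\rceil,\qquad \gamma=\frac{R(\Delta_T^\ast-1)-\alpha}{R(\Delta_T^\ast-1)-R(\Delta_T^\ast)}, \] with $R(\Delta_T)=\dfrac{p_g}{(\Delta_T-1)p_s+\beta}$ for $\Delta_T\ge1$, $R(0)=1$, and $\beta=1-(1-p_s)(1-p_g)$.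
   Context: Time is slotted, $t\in\{0,1,2,\dots\}$. An information source generates a new version in each slot independently with probability $p_g$; let $G_t\in\{0,1\}$ indicate whether a new version is generated in slot $t$. A transmitter holding the current source version may, in each slot $t$, attempt to send it to a receiver over an erasure channel; $a(t)\in\{0,1\}$ indicates an attempt, and each attempt succeeds independently with probability $p_s$. The Version Age of Information (VAoI) $\Delta(t)$ evolves as $\Delta(t+1)=G_t$ if $a(t)=1$ and the attempt succeeds, and $\Delta(t+1)=\Delta(t)+G_t$ otherwise. All version-generation and channel events are mutually independent. Assume $0<p_s<1$, $0<p_g<1$. The average VAoI of a policy is $\lim_{T\to\infty}\frac1T\mathbb{E}[\sum_{t=0}^{T-1}\Delta(t)]$. A threshold policy with threshold $\Delta_T\in\{0,1,2,\dots\}$ sets $a(t)=1$ iff $\Delta(t)\ge\Delta_T$; its long-run transmission rate is $R(\Delta_T)$, the stationary probability that $\Delta\ge\Delta_T$. A randomized mixture of threshold policies with thresholds $\Delta_T^\ast$ and $\Delta_T^\ast-1$ with probabilities $\gamma$ and $1-\gamma$ is a policy whose average transmission rate is $\gamma R(\Delta_T^\ast)+(1-\gamma)R(\Delta_T^\ast-1)$ and whose average VAoI is $\gamma\bar\Delta_{(\Delta_T^\ast)}+(1-\gamma)\bar\Delta_{(\Delta_T^\ast-1)}$, where $\bar\Delta_{(\Delta_T)}$ denotes the average VAoI of the threshold policy with threshold $\Delta_T$. *)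

From Stdlib Require Import Reals Lra.
From Coquelicot Require Import Coquelicot.
Open Scope R_scope.

(* Transition probability P(Delta(t+1) = k | Delta(t) = j) of the VAoI chain
   under the threshold policy with threshold d (transmit iff Delta >= d). *)
Definition trans (ps pg : R) (d j k : nat) : R :=
  let inc (i : nat) := (if Nat.eqb k i then 1 - pg else 0)
                     + (if Nat.eqb k (S i) then pg else 0) in
  if Nat.ltb j d then inc j
  else ps * inc 0%nat + (1 - ps) * inc j.

(* dist ps pg d x0 t k = P(Delta(t) = k), starting from Delta(0) = x0.
   Delta(t) <= x0 + t, so the support of dist t is {0,...,x0+t}. *)
Fixpoint dist (ps pg : R) (d x0 : nat) (t : nat) (k : nat) : R :=
  match t with
  | O => if Nat.eqb k x0 then 1 else 0
  | S t' => sum_f_R0 (fun j => dist ps pg d x0 t' j * trans ps pg d j k) (x0 + t')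
  end.

Definition expAoI (ps pg : R) (d x0 t : nat) : R :=
  sum_f_R0 (fun k => INR k * dist ps pg d x0 t k) (x0 + t).

(* E[a(t)] = P(Delta(t) >= d) *)
Definition expAct (ps pg : R) (d x0 t : nat) : R :=
  sum_f_R0 (fun k => if Nat.leb d k then dist ps pg d x0 t k else 0) (x0 + t).

(* Cesaro averages (1/T) sum_{t=0}^{T-1} f t, indexed by n = T - 1. *)
Definition cesaro (f : nat -> R) (n : nat) : R := sum_f_R0 f n / INR (S n).

Definition Rceil (x : R) : Z := (- (up (- x) - 1))%Z.

(* Under a threshold policy the age is a Markov chain with transition operator
   [P].  If the Poisson equation [f + P h - h = c] has a solution [h] of at most
   linear growth, the Cesaro averages of [E f(Delta(t))] tend to [c]: the sum of
   the equation telescopes, and [E Delta(t)] stays bounded because every attempt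
   resets the age with probability [ps].  Explicit solutions give the closed
   forms [R(d)] and [V(d)] of the rate and of the average age.  For the
   constrained problem, take the multiplier [lam] for which the Lagrangian
   [V(u) + lam R(u)] agrees at [u = s - 1] and [u = s], [s = dstar]; it exceeds
   its value at [s] by [ps (u - s) (u - s + 1) / (2 D(u)) >= 0], where
   [D(u) = (1 - ps) pg + ps u], at every integer [u], so by weak duality the
   mixture of [s] and [s - 1] that exhausts the rate budget is optimal. *)

From Stdlib Require Import Reals Lra Lia ZArith.
From Coquelicot Require Import Coquelicot.
Open Scope R_scope.

Lemma sum_f_R0_indicator (g : nat -> R) (i M : nat) :
  sum_f_R0 (fun k => if Nat.eqb k i then g k else 0) M =
  if Nat.leb i M then g i else 0.
Proof.
  induction M as [|M IH].
  - simpl. destruct (Nat.eqb_spec 0 i) as [<-|Hi]; [reflexivity|].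
    destruct i; [lia|reflexivity].
  - rewrite tech5, IH.
    destruct (Nat.eqb_spec (S M) i) as [<-|Hi].
    + replace (Nat.leb (S M) M) with false by (symmetry; apply Nat.leb_gt; lia).
      rewrite Nat.leb_refl. ring.
    + destruct (Nat.leb_spec i M), (Nat.leb_spec i (S M)); first [ring | lia].
Qed.

Lemma sum_f_R0_swap (a : nat -> nat -> R) (M N : nat) :
  sum_f_R0 (fun k => sum_f_R0 (fun j => a j k) N) M =
  sum_f_R0 (fun j => sum_f_R0 (fun k => a j k) M) N.
Proof.
  induction M as [|M IH]; [reflexivity|].
  rewrite tech5, IH, <- sum_plus. apply sum_eq. intros. now rewrite tech5.
Qed.

Lemma bounded_initial_segment (u : nat -> R) (m : nat) :
  exists A, forall k, (k <= m)%nat -> Rabs (u k) <= A.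
Proof.
  induction m as [|m [A HA]].
  - exists (Rabs (u 0%nat)). intros k Hk. replace k with 0%nat by lia. lra.
  - exists (Rmax A (Rabs (u (S m)))). intros k Hk.
    destruct (Nat.eq_dec k (S m)) as [->|Hk']; [apply Rmax_r|].
    eapply Rle_trans; [apply HA; lia | apply Rmax_l].
Qed.

Lemma affine_tail_growth (h : nat -> R) (m : nat) (a b : R) :
  (forall k, (m <= k)%nat -> h k = a + b * INR k) ->
  exists A B, 0 <= B /\ forall k, Rabs (h k) <= A + B * INR k.
Proof.
  intros Htail. destruct (bounded_initial_segment h m) as [A HA].
  exists (Rmax A (Rabs a)), (Rabs b). split; [apply Rabs_pos|]. intros k.
  assert (Hk : 0 <= Rabs b * INR k) by (apply Rmult_le_pos; [apply Rabs_pos|apply pos_INR]).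
  destruct (Nat.le_gt_cases m k) as [Hmk|Hkm].
  - rewrite (Htail k Hmk).
    eapply Rle_trans; [apply Rabs_triang|].
    rewrite Rabs_mult, (Rabs_right (INR k)) by (apply Rle_ge, pos_INR).
    pose proof (Rmax_r A (Rabs a)). lra.
  - pose proof (HA k ltac:(lia)). pose proof (Rmax_l A (Rabs a)). lra.
Qed.

Lemma cesaro_telescoping (u v : nat -> R) (c M : R) :
  (forall t, u t = c + v t - v (S t)) -> (forall t, Rabs (v t) <= M) ->
  is_lim_seq (cesaro u) c.
Proof.
  intros Hu Hv.
  assert (Hsum : forall n, sum_f_R0 u n = INR (S n) * c + v 0%nat - v (S n)).
  { induction n as [|n IH].
    - simpl. rewrite Hu. ring.
    - rewrite tech5, IH, Hu, (S_INR (S n)). ring. }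
  assert (Hlim : forall e, is_lim_seq (fun n => c + e / INR (S n)) c).
  { intros e.
    assert (Hinv : is_lim_seq (fun n => / INR (S n)) 0).
    { apply (is_lim_seq_incr_1 (fun n => / INR n) 0).
      replace (Finite 0) with (Rbar_inv p_infty) by reflexivity.
      apply is_lim_seq_inv; [apply is_lim_seq_INR | discriminate]. }
    pose proof (is_lim_seq_plus' _ _ c (e * 0) (is_lim_seq_const c)
                  (is_lim_seq_scal_l _ e 0 Hinv)) as H.
    rewrite Rmult_0_r, Rplus_0_r in H. exact H. }
  apply is_lim_seq_le_le with (u := fun n => c + (- (2 * M)) / INR (S n))
                              (w := fun n => c + (2 * M) / INR (S n));
    [| apply Hlim | apply Hlim].
  intros n. unfold cesaro. rewrite Hsum.
  pose proof (Hv 0%nat) as H0. pose proof (Hv (S n)) as H1.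
  apply Rabs_le_between in H0. apply Rabs_le_between in H1.
  assert (Hn : 0 < INR (S n)) by (apply lt_0_INR; lia).
  replace ((INR (S n) * c + v 0%nat - v (S n)) / INR (S n))
    with (c + (v 0%nat - v (S n)) / INR (S n)) by (field; lra).
  split; apply Rplus_le_compat_l; apply Rmult_le_compat_r;
    try (left; apply Rinv_0_lt_compat); lra.
Qed.

Definition rate_den (ps pg u : R) : R := (1 - ps) * pg + ps * u.

Definition rate_at (ps pg u : R) : R := pg / rate_den ps pg u.

Definition aoi_at (ps pg u : R) : R :=
  (ps * u * (u - 1) / 2 + u * pg + (1 - ps) * pg ^ 2 / ps) / rate_den ps pg u.

Definition threshold_rate (ps pg : R) (d : nat) : R :=
  match d with O => 1 | S _ => rate_at ps pg (INR d) end.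

(* Thresholds 0 and 1 induce the same chain: at age 0 a delivery brings
   nothing new, so it leaves the age unchanged. *)
Definition threshold_aoi (ps pg : R) (d : nat) : R := aoi_at ps pg (INR (Nat.max d 1)).

Lemma threshold_rate_pos_eq (ps pg : R) (d : nat) : (1 <= d)%nat ->
  threshold_rate ps pg d = rate_at ps pg (INR d).
Proof. intros Hd. destruct d; [lia | reflexivity]. Qed.

Section ThresholdChain.

Variables (ps pg : R) (d x0 : nat).

Definition trans_op (g : nat -> R) (j : nat) : R :=
  if Nat.ltb j d then (1 - pg) * g j + pg * g (S j)
  else ps * ((1 - pg) * g 0%nat + pg * g 1%nat)
       + (1 - ps) * ((1 - pg) * g j + pg * g (S j)).

Definition expect (t : nat) (g : nat -> R) : R :=
  sum_f_R0 (fun k => dist ps pg d x0 t k * g k) (x0 + t).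

Lemma sum_trans_mul (g : nat -> R) (j M : nat) : (S j <= M)%nat ->
  sum_f_R0 (fun k => trans ps pg d j k * g k) M = trans_op g j.
Proof.
  intros HM.
  assert (Hinc : forall i a b, (S i <= M)%nat ->
    sum_f_R0 (fun k => ((if Nat.eqb k i then a else 0)
                        + (if Nat.eqb k (S i) then b else 0)) * g k) M
    = a * g i + b * g (S i)).
  { intros i a b Hi.
    rewrite (sum_eq _ (fun k => (if Nat.eqb k i then a * g k else 0)
                                + (if Nat.eqb k (S i) then b * g k else 0)))
      by (intros k _; destruct (Nat.eqb k i), (Nat.eqb k (S i)); ring).
    rewrite sum_plus, !sum_f_R0_indicator.
    replace (Nat.leb i M) with true by (symmetry; apply Nat.leb_le; lia).
    replace (Nat.leb (S i) M) with true by (symmetry; apply Nat.leb_le; lia).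
    reflexivity. }
  unfold trans, trans_op. cbv zeta. destruct (Nat.ltb j d); [now apply Hinc|].
  rewrite (sum_eq _ (fun k =>
      ((if Nat.eqb k 0 then ps * (1 - pg) else 0) + (if Nat.eqb k 1 then ps * pg else 0)) * g k
    + ((if Nat.eqb k j then (1 - ps) * (1 - pg) else 0)
       + (if Nat.eqb k (S j) then (1 - ps) * pg else 0)) * g k)).
  2:{ intros k _. destruct (Nat.eqb k 0), (Nat.eqb k 1), (Nat.eqb k j), (Nat.eqb k (S j)); ring. }
  rewrite sum_plus, (Hinc 0%nat), (Hinc j) by lia. ring.
Qed.

Lemma expect_O (g : nat -> R) : expect 0 g = g x0.
Proof.
  unfold expect. simpl dist. rewrite Nat.add_0_r.
  rewrite (sum_eq _ (fun k => if Nat.eqb k x0 then g k else 0))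
    by (intros k _; destruct (Nat.eqb k x0); ring).
  now rewrite sum_f_R0_indicator, Nat.leb_refl.
Qed.

Lemma expect_S (t : nat) (g : nat -> R) : expect (S t) g = expect t (trans_op g).
Proof.
  unfold expect. rewrite Nat.add_succ_r. simpl dist.
  rewrite (sum_eq _ (fun k => sum_f_R0
             (fun j => dist ps pg d x0 t j * trans ps pg d j k * g k) (x0 + t))).
  2:{ intros k _. rewrite Rmult_comm, scal_sum. apply sum_eq. intros; ring. }
  rewrite sum_f_R0_swap. apply sum_eq. intros j Hj.
  rewrite <- (sum_trans_mul g j (S (x0 + t))) by lia.
  rewrite scal_sum. apply sum_eq. intros; ring.
Qed.

Lemma expect_ext (t : nat) (g h : nat -> R) : (forall k, g k = h k) ->
  expect t g = expect t h.
Proof. intros H. apply sum_eq. intros k _. now rewrite H. Qed.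

Lemma expect_lin (t : nat) (g h : nat -> R) (a b : R) :
  expect t (fun k => a * g k + b * h k) = a * expect t g + b * expect t h.
Proof.
  unfold expect.
  rewrite (sum_eq _ (fun k => dist ps pg d x0 t k * g k * a + dist ps pg d x0 t k * h k * b))
    by (intros; ring).
  rewrite sum_plus, <- !scal_sum. ring.
Qed.

Lemma expect_const (t : nat) (B : R) : expect t (fun _ => B) = B.
Proof.
  induction t as [|t IH]; [apply expect_O|].
  rewrite expect_S, (expect_ext t _ (fun _ => B)); [exact IH|].
  intros k. unfold trans_op. destruct (Nat.ltb k d); ring.
Qed.

Hypothesis Hps : 0 < ps < 1.
Hypothesis Hpg : 0 < pg < 1.

Lemma dist_nonneg (t k : nat) : 0 <= dist ps pg d x0 t k.
Proof.
  revert k. induction t as [|t IH]; intros k; simpl.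
  - destruct (Nat.eqb k x0); lra.
  - apply cond_pos_sum. intros j. apply Rmult_le_pos; [apply IH|].
    unfold trans. cbv zeta.
    assert (Hinc : forall i, 0 <= (if Nat.eqb k i then 1 - pg else 0)
                                  + (if Nat.eqb k (S i) then pg else 0))
      by (intros i; destruct (Nat.eqb k i), (Nat.eqb k (S i)); lra).
    destruct (Nat.ltb j d); [apply Hinc|].
    pose proof (Hinc 0%nat). pose proof (Hinc j). nra.
Qed.

Lemma expect_le (t : nat) (g h : nat -> R) : (forall k, g k <= h k) ->
  expect t g <= expect t h.
Proof.
  intros H. apply sum_Rle. intros k _.
  apply Rmult_le_compat_l; [apply dist_nonneg | apply H].
Qed.

(* Each slot at or above the threshold resets the age with probability [ps],
   so [E Delta(t+1) <= (1 - ps) E Delta(t) + ps d + pg]. *)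
Lemma expect_INR_le (t : nat) : expect t INR <= INR x0 + INR d + pg / ps.
Proof.
  assert (Hpgps : ps * (pg / ps) = pg) by (field; lra).
  assert (0 <= INR x0) by apply pos_INR.
  assert (0 <= INR d) by apply pos_INR.
  induction t as [|t IH].
  - rewrite expect_O. assert (0 < pg / ps) by (apply Rdiv_lt_0_compat; lra). lra.
  - rewrite expect_S.
    apply Rle_trans with
      (expect t (fun k => (1 - ps) * INR k + (ps * INR d + pg) * 1)).
    + apply expect_le. intros k. unfold trans_op. rewrite S_INR. simpl (INR 0); simpl (INR 1).
      destruct (Nat.ltb_spec k d) as [Hk|Hk].
      * apply lt_INR in Hk. nra.
      * nra.
    + rewrite (expect_lin t INR (fun _ => 1)), expect_const. nra.
Qed.

Lemma cesaro_expect_poisson (f h : nat -> R) (c a b : R) (m : nat) :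
  (forall j, f j + trans_op h j - h j = c) ->
  (forall k, (m <= k)%nat -> h k = a + b * INR k) ->
  is_lim_seq (cesaro (fun t => expect t f)) c.
Proof.
  intros Hpoisson Htail.
  destruct (affine_tail_growth h m a b Htail) as (A & B & HB & Hh).
  apply (cesaro_telescoping _ (fun t => expect t h) c (A + B * (INR x0 + INR d + pg / ps))).
  - intros t. rewrite expect_S.
    rewrite (expect_ext t (trans_op h) (fun k => c * 1 + 1 * (h k - f k)))
      by (intros k; rewrite <- (Hpoisson k); ring).
    rewrite expect_lin, expect_const.
    rewrite (expect_ext t (fun k => h k - f k) (fun k => 1 * h k + (-1) * f k)) by (intros; ring).
    rewrite expect_lin. ring.
  - intros t. pose proof (expect_INR_le t) as HI.
    assert (HBI : B * expect t INR <= B * (INR x0 + INR d + pg / ps))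
      by (apply Rmult_le_compat_l; assumption).
    apply Rabs_le. split.
    + apply Rle_trans with (expect t (fun k => (- A) * 1 + (- B) * INR k)).
      * rewrite (expect_lin t (fun _ => 1) INR), expect_const. lra.
      * apply expect_le. intros k. specialize (Hh k). apply Rabs_le_between in Hh. lra.
    + apply Rle_trans with (expect t (fun k => A * 1 + B * INR k)).
      * apply expect_le. intros k. specialize (Hh k). apply Rabs_le_between in Hh. lra.
      * rewrite (expect_lin t (fun _ => 1) INR), expect_const. lra.
Qed.

Lemma cesaro_expAct_lim :
  is_lim_seq (cesaro (expAct ps pg d x0)) (threshold_rate ps pg d).
Proof.
  set (c := threshold_rate ps pg d).
  apply is_lim_seq_ext with
    (u := cesaro (fun t => expect t (fun k => if Nat.leb d k then 1 else 0))).
  { intros n. unfold cesaro. f_equal. apply sum_eq. intros t _.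
    apply sum_eq. intros k _. destruct (Nat.leb d k); ring. }
  (* up to a constant, [h k] is [- c] times the mean time [(d - k) / pg] the
     age needs to climb from [k] to the threshold *)
  apply (cesaro_expect_poisson _ (fun k => c / pg * INR (Nat.min k d)) c (c / pg * INR d) 0 d).
  - intros j. unfold trans_op. destruct (Nat.ltb_spec j d) as [Hj|Hj].
    + replace (Nat.leb d j) with false by (symmetry; apply Nat.leb_gt; lia).
      rewrite (Nat.min_l j d), (Nat.min_l (S j) d), S_INR by lia. field. lra.
    + replace (Nat.leb d j) with true by (symmetry; apply Nat.leb_le; lia).
      rewrite (Nat.min_r j d), (Nat.min_r (S j) d), (Nat.min_l 0 d) by lia.
      destruct (Nat.eq_dec d 0) as [Hd0|Hd].
      * unfold c. rewrite Hd0. simpl. ring.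
      * assert (Hden : 0 < rate_den ps pg (INR d))
          by (unfold rate_den; pose proof (pos_INR d); nra).
        rewrite (Nat.min_l 1 d) by lia.
        unfold c. rewrite threshold_rate_pos_eq by lia.
        unfold rate_at in *. unfold rate_den in *. simpl (INR 0); simpl (INR 1).
        field. lra.
  - intros k Hk. rewrite Nat.min_r by lia. ring.
Qed.

Lemma cesaro_expAoI_lim :
  is_lim_seq (cesaro (expAoI ps pg d x0)) (threshold_aoi ps pg d).
Proof.
  apply is_lim_seq_ext with (u := cesaro (fun t => expect t INR)).
  { intros n. unfold cesaro. f_equal. apply sum_eq. intros t _.
    apply sum_eq. intros k _. ring. }
  set (m := Nat.max d 1). set (c := threshold_aoi ps pg d).
  assert (Hmd : m = Nat.max d 1) by reflexivity.
  assert (Hm : 1 <= INR m) by (apply (le_INR 1); lia).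
  assert (Hden : 0 < rate_den ps pg (INR m)) by (unfold rate_den; nra).
  (* relative value: quadratic below [m], where the age climbs at rate [pg];
     affine of slope [1 / ps] above, the mean wait for a successful reset *)
  set (q := fun j => (INR j * c - INR j * (INR j - 1) / 2) / pg).
  apply (cesaro_expect_poisson _ (fun j => q (Nat.min j m) + (INR j - INR (Nat.min j m)) / ps)
           c (q m - INR m / ps) (/ ps) m).
  - intros j. unfold trans_op. destruct (Nat.ltb_spec j d) as [Hj|Hj].
    + rewrite (Nat.min_l j m), (Nat.min_l (S j) m) by lia.
      unfold q. rewrite S_INR. field. lra.
    + rewrite (Nat.min_l 0 m), (Nat.min_l 1 m) by lia.
      destruct (Nat.le_gt_cases m j) as [Hmj|Hjm].
      * rewrite (Nat.min_r j m), (Nat.min_r (S j) m) by lia.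
        unfold q, c, threshold_aoi, aoi_at. fold m. unfold rate_den in *.
        rewrite (S_INR j). simpl (INR 0); simpl (INR 1). field. lra.
      * assert (j = 0%nat) as -> by lia.
        rewrite (Nat.min_l 0 m), (Nat.min_l 1 m) by lia. unfold q. simpl (INR 0); simpl (INR 1). field. lra.
  - intros k Hk. rewrite Nat.min_r by lia. field. lra.
Qed.

End ThresholdChain.

Lemma mixture_weight (r0 r1 alpha : R) : r1 <= alpha <= r0 -> r1 < r0 ->
  0 <= (r0 - alpha) / (r0 - r1) <= 1 /\
  (r0 - alpha) / (r0 - r1) * r1 + (1 - (r0 - alpha) / (r0 - r1)) * r0 = alpha.
Proof.
  intros Halpha Hr. split; [|field; lra].
  assert (Hinv : 0 < / (r0 - r1)) by (apply Rinv_0_lt_compat; lra).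
  replace ((r0 - alpha) / (r0 - r1)) with (1 - (alpha - r1) * / (r0 - r1)) by (field; lra).
  split; [|nra].
  replace (alpha - r1) with ((r0 - r1) - (r0 - alpha)) by ring.
  rewrite Rmult_minus_distr_r, Rinv_r by lra. nra.
Qed.

(* Weak Lagrangian duality: a mixture that attains the minimum [W] of
   [avg + lam * rate] and exhausts the budget [alpha] is optimal. *)
Lemma lagrange_mixture_optimal (rate avg : nat -> R) (lam W alpha gamma : R) (d0 d1 : nat) :
  0 <= lam -> (forall d, W <= avg d + lam * rate d) ->
  avg d0 + lam * rate d0 = W -> avg d1 + lam * rate d1 = W ->
  gamma * rate d0 + (1 - gamma) * rate d1 = alpha ->
  forall (e1 e2 : nat) (g : R), 0 <= g <= 1 ->
    g * rate e1 + (1 - g) * rate e2 <= alpha ->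
    gamma * avg d0 + (1 - gamma) * avg d1 <= g * avg e1 + (1 - g) * avg e2.
Proof.
  intros Hlam HW H0 H1 Hmix e1 e2 g Hg Hbudget.
  pose proof (HW e1). pose proof (HW e2).
  assert (Hopt : gamma * avg d0 + (1 - gamma) * avg d1 = W - lam * alpha).
  { rewrite <- Hmix. replace (avg d0) with (W - lam * rate d0) by lra.
    replace (avg d1) with (W - lam * rate d1) by lra. ring. }
  assert (0 <= g * (avg e1 + lam * rate e1 - W)) by (apply Rmult_le_pos; lra).
  assert (0 <= (1 - g) * (avg e2 + lam * rate e2 - W)) by (apply Rmult_le_pos; lra).
  assert (0 <= lam * (alpha - (g * rate e1 + (1 - g) * rate e2))) by (apply Rmult_le_pos; lra).
  nra.
Qed.

Section Lagrangian.

Variables ps pg : R.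
Hypothesis Hps : 0 < ps < 1.
Hypothesis Hpg : 0 < pg < 1.

Lemma rate_den_pos (u : R) : 0 <= u -> 0 < rate_den ps pg u.
Proof. intros Hu. unfold rate_den. nra. Qed.

Lemma rate_at_le_iff (alpha u : R) : 0 < alpha -> 0 <= u ->
  rate_at ps pg u <= alpha <-> pg / ps * (1 / alpha - 1 + ps) <= u.
Proof.
  intros Halpha Hu. set (x := pg / ps * (1 / alpha - 1 + ps)).
  pose proof (rate_den_pos u Hu) as Hden.
  assert (Hgap : alpha - rate_at ps pg u = alpha * ps * / rate_den ps pg u * (u - x)).
  { unfold x, rate_at. unfold rate_den in *. field. lra. }
  assert (Hpos : 0 < alpha * ps * / rate_den ps pg u).
  { apply Rmult_lt_0_compat; [nra | apply Rinv_0_lt_compat; lra]. }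
  split; intros H; nra.
Qed.

(* The multiplier for which the Lagrangian takes the same value at [s - 1]
   and at [s]. *)
Definition lagrange_mult (s : R) : R :=
  (rate_den ps pg (s - 1) * rate_den ps pg s - rate_den ps pg 0 * rate_den ps pg 1)
  / (2 * ps * pg).

Definition lagrangian (s u : R) : R := aoi_at ps pg u + lagrange_mult s * rate_at ps pg u.

Lemma lagrangian_sub (s u : R) : 0 <= s -> 0 <= u ->
  lagrangian s u - lagrangian s s = ps * (u - s) * (u - s + 1) / (2 * rate_den ps pg u).
Proof.
  intros Hs Hu. pose proof (rate_den_pos s Hs). pose proof (rate_den_pos u Hu).
  unfold lagrangian, lagrange_mult, aoi_at, rate_at in *. unfold rate_den in *.
  field. lra.
Qed.

Lemma lagrange_mult_nonneg (s : R) : 1 <= s -> 0 <= lagrange_mult s.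
Proof.
  intros Hs. unfold lagrange_mult.
  assert (H0 : 0 < rate_den ps pg 0) by (apply rate_den_pos; lra).
  assert (H1 : 0 < rate_den ps pg 1) by (apply rate_den_pos; lra).
  assert (rate_den ps pg 0 <= rate_den ps pg (s - 1)) by (unfold rate_den; nra).
  assert (rate_den ps pg 1 <= rate_den ps pg s) by (unfold rate_den; nra).
  apply Rmult_le_pos; [nra | left; apply Rinv_0_lt_compat; nra].
Qed.

(* By [lagrangian_sub], since [(n - s) (n - s + 1)] is a product of two
   consecutive integers. *)
Lemma lagrangian_min_nat (s n : nat) :
  lagrangian (INR s) (INR s) <= lagrangian (INR s) (INR n).
Proof.
  pose proof (lagrangian_sub (INR s) (INR n) (pos_INR s) (pos_INR n)) as Hsub.
  pose proof (rate_den_pos (INR n) (pos_INR n)).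
  assert (Hcons : 0 <= (INR n - INR s) * (INR n - INR s + 1)).
  { destruct (Nat.le_gt_cases s n) as [Hsn|Hns].
    - apply le_INR in Hsn. nra.
    - apply le_INR in Hns. rewrite S_INR in Hns. nra. }
  assert (0 <= ps * (INR n - INR s) * (INR n - INR s + 1) / (2 * rate_den ps pg (INR n))).
  { apply Rmult_le_pos; [|left; apply Rinv_0_lt_compat; lra].
    rewrite Rmult_assoc. apply Rmult_le_pos; lra. }
  lra.
Qed.

Lemma threshold_lagrangian_ge (s d : nat) : (1 <= s)%nat ->
  lagrangian (INR s) (INR s)
  <= threshold_aoi ps pg d + lagrange_mult (INR s) * threshold_rate ps pg d.
Proof.
  intros Hs.
  assert (Hlam : 0 <= lagrange_mult (INR s)) by (apply lagrange_mult_nonneg, (le_INR 1); lia).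
  pose proof (lagrangian_min_nat s (Nat.max d 1)) as Hmin.
  destruct d as [|n].
  - assert (Hr1 : rate_at ps pg 1 <= 1).
    { apply (rate_at_le_iff 1 1); try lra.
      replace (pg / ps * (1 / 1 - 1 + ps)) with pg by (field; lra). lra. }
    unfold threshold_aoi, threshold_rate, lagrangian in *. simpl (Nat.max 0 1) in *.
    simpl (INR 1) in *. nra.
  - unfold threshold_aoi, threshold_rate. rewrite Nat.max_l in * by lia. exact Hmin.
Qed.

Lemma threshold_lagrangian_self (s : nat) : (1 <= s)%nat ->
  threshold_aoi ps pg s + lagrange_mult (INR s) * threshold_rate ps pg s
  = lagrangian (INR s) (INR s).
Proof.
  intros Hs. unfold threshold_aoi. rewrite threshold_rate_pos_eq, Nat.max_l by lia.
  reflexivity.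
Qed.

Lemma threshold_lagrangian_pred (s : nat) : (1 <= s)%nat ->
  threshold_aoi ps pg (s - 1) + lagrange_mult (INR s) * threshold_rate ps pg (s - 1)
  = lagrangian (INR s) (INR s).
Proof.
  intros Hs. destruct (Nat.eq_dec s 1) as [->|Hs1].
  - assert (Hlam : lagrange_mult (INR 1) = 0)
      by (unfold lagrange_mult; simpl (INR 1); replace (1 - 1) with 0 by ring; field; lra).
    unfold threshold_aoi, threshold_rate, lagrangian. rewrite Hlam. simpl. ring.
  - assert (Hpred : INR (s - 1) = INR s - 1) by (rewrite minus_INR by lia; reflexivity).
    assert (Hs2 : 2 <= INR s) by (apply (le_INR 2); lia).
    pose proof (lagrangian_sub (INR s) (INR s - 1) ltac:(lra) ltac:(lra)) as Hsub.
    replace (ps * (INR s - 1 - INR s) * (INR s - 1 - INR s + 1)) with 0 in Hsub by ring.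
    unfold threshold_aoi. rewrite threshold_rate_pos_eq, Nat.max_l, Hpred by lia.
    unfold lagrangian in *. unfold Rdiv at 1 in Hsub. lra.
Qed.

Lemma threshold_point_pos (alpha : R) : 0 < alpha <= 1 ->
  0 < pg / ps * (1 / alpha - 1 + ps).
Proof.
  intros Halpha. apply Rmult_lt_0_compat; [apply Rdiv_lt_0_compat; lra|].
  assert (/ 1 <= / alpha) by (apply Rinv_le_contravar; lra).
  unfold Rdiv. rewrite Rmult_1_l. rewrite Rinv_1 in *. lra.
Qed.

Lemma threshold_rate_bracket (alpha : R) (s : nat) : 0 < alpha <= 1 -> (1 <= s)%nat ->
  pg / ps * (1 / alpha - 1 + ps) <= INR s < pg / ps * (1 / alpha - 1 + ps) + 1 ->
  threshold_rate ps pg s <= alpha <= threshold_rate ps pg (s - 1)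
  /\ threshold_rate ps pg s < threshold_rate ps pg (s - 1).
Proof.
  intros Halpha Hs Hceil.
  assert (Hle : threshold_rate ps pg s <= alpha).
  { rewrite threshold_rate_pos_eq by lia. apply rate_at_le_iff; [lra | apply pos_INR | lra]. }
  destruct (Nat.eq_dec s 1) as [->|Hs1].
  - assert (Hr1 : rate_at ps pg 1 < 1).
    { unfold rate_at. pose proof (rate_den_pos 1 ltac:(lra)) as Hden.
      apply Rmult_lt_reg_r with (rate_den ps pg 1); [lra|].
      unfold Rdiv. rewrite Rmult_assoc, Rinv_l by lra. unfold rate_den. nra. }
    simpl in *. lra.
  - assert (Hpred : INR (s - 1) = INR s - 1) by (rewrite minus_INR by lia; reflexivity).
    assert (Hgt : alpha < threshold_rate ps pg (s - 1)).
    { rewrite threshold_rate_pos_eq by lia. apply Rnot_le_lt. rewrite rate_at_le_iff.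
      - rewrite Hpred. lra.
      - lra.
      - apply pos_INR. }
    lra.
Qed.

End Lagrangian.

Lemma Rceil_to_nat_spec (x : R) : 0 < x ->
  (1 <= Z.to_nat (Rceil x))%nat /\
  x <= INR (Z.to_nat (Rceil x)) < x + 1.
Proof.
  intros Hx. unfold Rceil. destruct (archimed (- x)) as [Hup1 Hup2].
  assert (Hc : x <= IZR (- (up (- x) - 1)) < x + 1)
    by (rewrite opp_IZR, minus_IZR; simpl (IZR 1); lra).
  assert (Hpos : (0 < - (up (- x) - 1))%Z) by (apply lt_0_IZR; lra).
  rewrite INR_IZR_INZ, Z2Nat.id by lia. split; [lia | exact Hc].
Qed.

Theorem theorem1 (ps pg alpha : R) (x0 : nat) :
  0 < ps < 1 -> 0 < pg < 1 -> 0 < alpha <= 1 ->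
  let beta := 1 - (1 - ps) * (1 - pg) in
  let Rf := fun d : nat => match d with
                           | O => 1
                           | S _ => pg / ((INR d - 1) * ps + beta)
                           end in
  let dstar := Z.to_nat (Rceil (pg / ps * (1 / alpha - 1 + ps))) in
  let gamma := (Rf (dstar - 1)%nat - alpha) / (Rf (dstar - 1)%nat - Rf dstar) in
  exists (rate avg : nat -> R),
    (* long-run transmission rate and average VAoI of each threshold policy *)
    (forall d, is_lim_seq (cesaro (expAct ps pg d x0)) (rate d)) /\
    (forall d, is_lim_seq (cesaro (expAoI ps pg d x0)) (avg d)) /\
    (* closed form of the rate *)
    (forall d, rate d = Rf d) /\
    (* the prescribed mixture is a valid randomization and meets the constraint *)
    0 <= gamma <= 1 /\
    gamma * rate dstar + (1 - gamma) * rate (dstar - 1)%nat <= alpha /\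
    (* and it is optimal among all (mixtures of two) threshold policies
       satisfying the rate constraint *)
    (forall (d1 d2 : nat) (g : R), 0 <= g <= 1 ->
       g * rate d1 + (1 - g) * rate d2 <= alpha ->
       gamma * avg dstar + (1 - gamma) * avg (dstar - 1)%nat
         <= g * avg d1 + (1 - g) * avg d2).
Proof.
  intros Hps Hpg Halpha beta Rf dstar gamma.
  assert (HRf : forall d, Rf d = threshold_rate ps pg d).
  { intros [|n]; [reflexivity|]. unfold Rf, threshold_rate, rate_at, rate_den, beta.
    f_equal. ring. }
  destruct (Rceil_to_nat_spec _ (threshold_point_pos ps pg Hps Hpg alpha Halpha)) as [Hd1 Hceil]. fold dstar in Hd1, Hceil.
  destruct (threshold_rate_bracket ps pg Hps Hpg alpha dstar Halpha Hd1 Hceil)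
    as [Hbracket Hlt].
  destruct (mixture_weight _ _ alpha Hbracket Hlt) as [Hgamma Hmix].
  unfold gamma. rewrite !HRf.
  exists (threshold_rate ps pg), (threshold_aoi ps pg).
  split; [intros d; apply cesaro_expAct_lim; assumption|].
  split; [intros d; apply cesaro_expAoI_lim; assumption|].
  split; [intros d; symmetry; apply HRf|].
  split; [exact Hgamma|]. split; [lra|].
  apply (lagrange_mixture_optimal _ _ (lagrange_mult ps pg (INR dstar))
           (lagrangian ps pg (INR dstar) (INR dstar))).
  - apply lagrange_mult_nonneg, (le_INR 1); assumption.
  - intros d. apply threshold_lagrangian_ge; assumption.
  - apply threshold_lagrangian_self; assumption.
  - apply threshold_lagrangian_pred; assumption.
  - exact Hmix.
Qed.
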